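(* Let $a,b\in\mathbb{R}$ with $a<b$, let $n\in\mathbb{N}$ with $n\ge2$, let $q>1$, $p=\frac{q}{q-1}$, and assume $2q-p-1>0$. Then $$\left|A(a^n,b^n)-L_n^n(a,b)\right|\le \frac{n(n-1)(b-a)^2}{2}\left(\frac{q-1}{2q-p-1}\right)^{\frac{q-1}{q}}\bigl(\beta(p+1,q+1)\bigr)^{\frac1q}\left(\max\{|a|^{(n-2)q},|b|^{(n-2)q}\}\right)^{\frac1q}.$$
   Context: $A(x,y)=\frac{x+y}{2}$ (arithmetic mean). For $a\ne b$ and $n\in\mathbb{Z}\setminus\{-1,0\}$, $L_n(a,b)=\left[\frac{b^{n+1}-a^{n+1}}{(n+1)(b-a)}\right]^{1/n}$ (generalized logarithmic mean), so $L_n^n(a,b)=\frac{b^{n+1}-a^{n+1}}{(n+1)(b-a)}$. $\beta(x,y)=\int_0^1 t^{x-1}(1-t)^{y-1}\,dt$. *)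

From Stdlib Require Import Reals Lra.
Open Scope R_scope.

(* Real power x^y for x >= 0, with the conventions 0^0 = 1 and 0^y = 0 for y <> 0
   (Stdlib's Rpower is only meaningful for positive base). *)
Definition rpow (x y : R) : R :=
  if Req_EM_T x 0 then (if Req_EM_T y 0 then 1 else 0) else Rpower x y.

Definition Amean (x y : R) : R := (x + y) / 2.

Definition Lnn (n : nat) (a b : R) : R :=
  (b ^ (n + 1) - a ^ (n + 1)) / ((INR n + 1) * (b - a)).

Definition beta_integrand (x y : R) (t : R) : R :=
  rpow t (x - 1) * rpow (1 - t) (y - 1).

Definition is_beta (x y B : R) : Prop :=
  exists pr : Riemann_integrable (beta_integrand x y) 0 1, RiemannInt pr = B.

From Stdlib Require Import Reals Lra Lia.
From Coquelicot Require Import Coquelicot.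
Open Scope R_scope.

(* Write n = m + 2 and M = max(|a|,|b|).  The proof compares the right-hand side
   with the classical trapezoid-rule error bound and shows that the latter is
   sharper:

   1. Trapezoid bound.  The trapezoid error of x^n on [a,x],
        G(x) = (a^n + x^n)/2 (x-a) - (x^(n+1) - a^(n+1))/(n+1),
      satisfies G(a) = G'(a) = 0 and |G''(x)| <= n(n-1) M^(n-2) (x-a)/2; two
      applications of a comparison principle for derivatives give
        |A(a^n,b^n) - L_n^n(a,b)| <= n(n-1)(b-a)^2/12 * M^(n-2).
   2. Constant bound.  With K = (2q-p-1)/(q-1) > 0, a pointwise Young
      inequality t(1-t) <= (s/p) t^(K-1) + t^p (1-t)^q / (q s^(q-1)), integrated
      over [eps,1] with eps -> 0 and optimized at s = K/6, gives
      beta(p+1,q+1) >= (K/6)^(q-1)/6, i.e. K^(-(q-1)/q) beta(p+1,q+1)^(1/q) >= 1/6.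
   3. Bookkeeping with real powers: max(|a|^((n-2)q),|b|^((n-2)q))^(1/q) = M^(n-2). *)

Lemma le_of_deriv_nonneg (H H' : R -> R) a x : a <= x ->
  (forall c, a <= c <= x -> derivable_pt_lim H c (H' c)) ->
  (forall c, a <= c <= x -> 0 <= H' c) -> H a <= H x.
Proof.
intros [hx|<-] hd hpos; [|lra].
destruct (MVT_cor2 H H' a x hx hd) as [c [e hc]].
assert (0 <= H' c * (x - a)) by (apply Rmult_le_pos; [apply hpos; lra | lra]).
lra.
Qed.

Lemma abs_le_of_deriv_abs_le (F F' P P' : R -> R) a b :
  F a = 0 -> P a = 0 ->
  (forall x, derivable_pt_lim F x (F' x)) -> (forall x, derivable_pt_lim P x (P' x)) ->
  (forall x, a <= x <= b -> Rabs (F' x) <= P' x) ->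
  forall x, a <= x <= b -> Rabs (F x) <= P x.
Proof.
intros F0 P0 dF dP hb x hx.
assert (signed : forall s, s = 1 \/ s = -1 -> s * F x <= P x).
{ intros s hs.
  assert (P a - s * F a <= P x - s * F x).
  { apply (le_of_deriv_nonneg (fun y => P y - s * F y) (fun y => P' y - s * F' y)); [lra| |].
    - intros c _. exact (derivable_pt_lim_minus _ _ _ _ _ (dP c)
                           (derivable_pt_lim_scal _ s _ _ (dF c))).
    - intros c hc. specialize (hb c ltac:(lra)). revert hb. unfold Rabs.
      destruct (Rcase_abs (F' c)); destruct hs; subst; intros; nra. }
  rewrite F0, P0 in H. lra. }
pose proof (signed 1 (or_introl eq_refl)). pose proof (signed (-1) (or_intror eq_refl)).
unfold Rabs; destruct (Rcase_abs (F x)); lra.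
Qed.

Lemma Rabs_le_Rmax_abs a b x : a <= x <= b -> Rabs x <= Rmax (Rabs a) (Rabs b).
Proof. intros. unfold Rmax, Rabs. repeat destruct Rcase_abs; destruct Rle_dec; lra. Qed.

Lemma Rmax_abs_nonneg a b : 0 <= Rmax (Rabs a) (Rabs b).
Proof. unfold Rmax; destruct Rle_dec; apply Rabs_pos. Qed.

Section Trapezoid.
(* The exponent is n = m + 2, so that the second derivative of x^n is a
   polynomial of degree m. *)
Variables (a : R) (m : nat).

Definition trap_err x :=
  (a^(m+2) + x^(m+2)) / 2 * (x - a) - (x^(m+2+1) - a^(m+2+1)) / (INR (m+2) + 1).
Definition trap_err1 x :=
  (INR m + 2) * x^(m+1) * (x - a) / 2 + (a^(m+2) - x^(m+2)) / 2.
Definition trap_err2 x := (INR m + 2) * (INR m + 1) * x^m * (x - a) / 2.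

Lemma trap_err_deriv x : derivable_pt_lim trap_err x (trap_err1 x).
Proof.
apply is_derive_Reals. unfold trap_err, trap_err1. auto_derive; auto.
replace (Init.Nat.pred (m+2)) with (m+1)%nat by lia.
replace (Init.Nat.pred (m+2+1)) with (m+2)%nat by lia.
rewrite !plus_INR; simpl.
replace (m+2)%nat with (S (m+1)) by lia. rewrite <- !tech_pow_Rmult.
field. pose proof (pos_INR m). lra.
Qed.

Lemma trap_err1_deriv x : derivable_pt_lim trap_err1 x (trap_err2 x).
Proof.
apply is_derive_Reals. unfold trap_err1, trap_err2. auto_derive; auto.
replace (Init.Nat.pred (m+2)) with (m+1)%nat by lia.
replace (Init.Nat.pred (m+1)) with m by lia.
rewrite !plus_INR; simpl. field.
Qed.

Lemma trap_err_at b : a < b ->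
  trap_err b = (b - a) * (Amean (a^(m+2)) (b^(m+2)) - Lnn (m+2) a b).
Proof.
intros hab. unfold trap_err, Amean, Lnn. field.
pose proof (pos_INR (m+2)). lra.
Qed.

Lemma trapezoid_monomial b : a < b ->
  Rabs (Amean (a^(m+2)) (b^(m+2)) - Lnn (m+2) a b)
  <= (INR m + 2) * (INR m + 1) * (b - a)^2 / 12 * Rmax (Rabs a) (Rabs b) ^ m.
Proof.
intros hab.
set (M := Rmax (Rabs a) (Rabs b) ^ m).
set (c := (INR m + 2) * (INR m + 1) * M).
assert (hM : 0 <= M) by (apply pow_le, Rmax_abs_nonneg).
assert (hm := pos_INR m).
assert (bound2 : forall x, a <= x <= b -> Rabs (trap_err2 x) <= c * (x - a) / 2).
{ intros x hx.
  assert (Rabs (x^m) <= M).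
  { rewrite <- RPow_abs. apply pow_incr. split; [apply Rabs_pos | now apply Rabs_le_Rmax_abs]. }
  unfold trap_err2, c.
  replace ((INR m + 2) * (INR m + 1) * x ^ m * (x - a) / 2)
    with (((INR m + 2) * (INR m + 1) * (x - a) / 2) * x^m) by field.
  rewrite Rabs_mult, (Rabs_right ((INR m + 2) * (INR m + 1) * (x - a) / 2)) by nra.
  replace ((INR m + 2) * (INR m + 1) * M * (x - a) / 2)
    with (((INR m + 2) * (INR m + 1) * (x - a) / 2) * M) by field.
  apply Rmult_le_compat_l; nra. }
assert (bound1 : forall x, a <= x <= b -> Rabs (trap_err1 x) <= c * (x - a)^2 / 4).
{ apply (abs_le_of_deriv_abs_le trap_err1 trap_err2
           (fun x => c * (x - a)^2 / 4) (fun x => c * (x - a) / 2) a b);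
    [unfold trap_err1; field | field | exact trap_err1_deriv | | exact bound2].
  intro x. apply is_derive_Reals. auto_derive; auto. field. }
assert (bound0 : Rabs (trap_err b) <= c * (b - a)^3 / 12).
{ apply (abs_le_of_deriv_abs_le trap_err trap_err1
           (fun x => c * (x - a)^3 / 12) (fun x => c * (x - a)^2 / 4) a b);
    [unfold trap_err, Rdiv; ring | field | exact trap_err_deriv | | exact bound1 | lra].
  intro x. apply is_derive_Reals. auto_derive; auto. field. }
rewrite trap_err_at, Rabs_mult, Rabs_right in bound0 by lra.
apply Rmult_le_reg_l with (b - a); [lra|].
unfold c in bound0. lra.
Qed.

End Trapezoid.

Lemma Rpower_gt0 x y : 0 < Rpower x y.
Proof. apply exp_pos. Qed.

Lemma conjugate_exponent_gt1 q p : 1 < q -> p = q / (q - 1) -> 1 < p.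
Proof. intros hq ->. apply (Rmult_lt_reg_r (q - 1)); [lra|]. field_simplify; lra. Qed.

Lemma exp_convex th u v : 0 <= th <= 1 ->
  exp (th * u + (1 - th) * v) <= th * exp u + (1 - th) * exp v.
Proof.
intros h. set (w := th * u + (1 - th) * v).
assert (eu : exp u = exp w * exp (u - w)) by (rewrite <- exp_plus; f_equal; ring).
assert (ev : exp v = exp w * exp (v - w)) by (rewrite <- exp_plus; f_equal; ring).
pose proof (exp_ineq1_le (u - w)). pose proof (exp_ineq1_le (v - w)). pose proof (exp_pos w).
assert (th * (exp w * (1 + (u - w))) + (1 - th) * (exp w * (1 + (v - w))) = exp w)
  by (unfold w; ring).
assert (exp w * (1 + (u - w)) <= exp w * exp (u - w)) by (apply Rmult_le_compat_l; lra).
assert (exp w * (1 + (v - w)) <= exp w * exp (v - w)) by (apply Rmult_le_compat_l; lra).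
rewrite eu, ev. nra.
Qed.

Lemma le_of_forall_sub_sq X B c : 0 <= c ->
  (forall eps, 0 < eps < 1 -> X - c * eps^2 <= B) -> X <= B.
Proof.
intros hc H. destruct (Rle_or_lt X B) as [|hlt]; [assumption|exfalso].
set (eps := Rmin (1 / 2) ((X - B) / (c + 1))).
assert (he1 : 0 < eps)
  by (unfold eps, Rmin; destruct Rle_dec; [lra | apply Rdiv_lt_0_compat; lra]).
assert (he2 : eps <= 1 / 2) by apply Rmin_l.
assert (he3 : eps * (c + 1) <= X - B).
{ apply (Rmult_le_reg_r (/ (c + 1))); [apply Rinv_0_lt_compat; lra|].
  replace (eps * (c + 1) * / (c + 1)) with eps by (field; lra). apply Rmin_r. }
specialize (H eps ltac:(lra)). nra.
Qed.

Section BetaLowerBound.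
Variables q p : R.
Hypothesis q_gt1 : 1 < q.
Hypothesis p_conj : p = q / (q - 1).
Hypothesis K_pos : 2 * q - p - 1 > 0.

Let K := (2 * q - p - 1) / (q - 1).

Let p_gt1 : 1 < p. Proof. exact (conjugate_exponent_gt1 q p q_gt1 p_conj). Qed.
Let K_gt0 : 0 < K. Proof. unfold K. apply Rdiv_lt_0_compat; lra. Qed.

(* Young's inequality xy <= x^p/p + y^q/q applied to t(1-t), with
   x = s^(1/p) t^((K-1)/p) and y = s^(-1/p) t^(p/q) (1-t) for a parameter s > 0. *)
Lemma young_pointwise s t : 0 < s -> 0 < t < 1 ->
  t * (1 - t) <= s / p * Rpower t (K - 1) + Rpower t p * Rpower (1 - t) q / (q * Rpower s (q - 1)).
Proof.
intros hs ht.
set (u := ln s + (K - 1) * ln t).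
set (v := p * ln t + q * ln (1 - t) - (q - 1) * ln s).
assert (e : 1 / p * u + (1 - 1 / p) * v = ln t + ln (1 - t))
  by (unfold u, v, K; subst p; field; split; lra).
assert (H := exp_convex (1 / p) u v).
rewrite e, exp_plus, !exp_ln in H by lra.
assert (eu : exp u = s * Rpower t (K - 1)) by (unfold u, Rpower; rewrite exp_plus, exp_ln; auto).
assert (ev : exp v = Rpower t p * Rpower (1 - t) q / Rpower s (q - 1)).
{ unfold v, Rpower.
  replace (p * ln t + q * ln (1 - t) - (q - 1) * ln s)
    with ((p * ln t + q * ln (1 - t)) + - ((q - 1) * ln s)) by ring.
  rewrite !exp_plus, exp_Ropp. reflexivity. }
assert (e1 : 1 - 1 / p = 1 / q) by (subst p; field; lra).
rewrite eu, ev, e1 in H.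
pose proof (Rpower_gt0 s (q - 1)).
replace (s / p * Rpower t (K - 1) + Rpower t p * Rpower (1 - t) q / (q * Rpower s (q - 1)))
  with (1 / p * (s * Rpower t (K - 1)) + 1 / q * (Rpower t p * Rpower (1 - t) q / Rpower s (q - 1)))
  by (field; lra).
apply H. split.
- apply Rlt_le, Rdiv_lt_0_compat; lra.
- apply (Rmult_le_reg_r p); [lra|]. field_simplify; lra.
Qed.

Lemma beta_integrand_interior t : 0 < t < 1 ->
  beta_integrand (p + 1) (q + 1) t = Rpower t p * Rpower (1 - t) q.
Proof.
intros ht. unfold beta_integrand, rpow.
destruct (Req_EM_T t 0); [lra|]. destruct (Req_EM_T (1 - t) 0); [lra|].
now replace (p + 1 - 1) with p by ring; replace (q + 1 - 1) with q by ring.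
Qed.

Lemma young_minorant_integral A eps : 0 < eps < 1 ->
  is_RInt (fun t => t - t^2 - A * Rpower t (K - 1)) eps 1
    (1 / 6 - A / K - (eps^2 / 2 - eps^3 / 3 - A * Rpower eps K / K)).
Proof.
intros he.
set (W := fun t => t^2 / 2 - t^3 / 3 - A * Rpower t K / K).
replace (1 / 6 - A / K - (eps^2 / 2 - eps^3 / 3 - A * Rpower eps K / K))
  with (W 1 - W eps).
2: { unfold W. replace (Rpower 1 K) with 1; [field; lra|].
     unfold Rpower. now rewrite ln_1, Rmult_0_r, exp_0. }
apply (is_RInt_derive W); rewrite Rmin_left, Rmax_right by lra; intros x hx.
- unfold W, Rpower. auto_derive; [lra|].
  replace (K * ln x) with ((K - 1) * ln x + ln x) by ring.
  rewrite exp_plus, exp_ln by lra. field. split; lra.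
- apply (@ex_derive_continuous R_AbsRing R_NormedModule).
  unfold Rpower. auto_derive. lra.
Qed.

(* Integrating Young's inequality over [eps,1] bounds beta(p+1,q+1) from below up to
   an O(eps^2) error; the cut-off at eps avoids the singularity of t^(K-1) at 0. *)
Lemma beta_ge_minus_sq B s eps : is_beta (p + 1) (q + 1) B -> 0 < s -> 0 < eps < 1 ->
  let D := q * Rpower s (q - 1) in
  D * (1 / 6 - s / (p * K)) - D * eps^2 / 2 <= B.
Proof.
intros [pr hB] hs he D.
assert (hD : 0 < D) by (unfold D; pose proof (Rpower_gt0 s (q - 1)); nra).
set (g := beta_integrand (p + 1) (q + 1)).
assert (hex : ex_RInt g 0 1) by exact (ex_RInt_Reals_1 _ _ _ pr).
assert (hex0 : ex_RInt g 0 eps) by (apply (ex_RInt_Chasles_1 g 0 eps 1); [lra|exact hex]).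
assert (hex1 : ex_RInt g eps 1) by (apply (ex_RInt_Chasles_2 g 0 eps 1); [lra|exact hex]).
assert (hI : RInt g 0 1 = B) by (rewrite (RInt_Reals g 0 1 pr); exact hB).
assert (hsplit : RInt g 0 eps + RInt g eps 1 = B)
  by (rewrite <- hI, <- (RInt_Chasles g 0 eps 1); auto).
assert (head_nonneg : 0 <= RInt g 0 eps).
{ apply RInt_ge_0; [lra | exact hex0 |].
  intros x hx. unfold g. rewrite beta_integrand_interior by lra.
  pose proof (Rpower_gt0 x p). pose proof (Rpower_gt0 (1 - x) q). nra. }
set (A := s / p).
set (I := 1 / 6 - A / K - (eps^2 / 2 - eps^3 / 3 - A * Rpower eps K / K)).
assert (hw : is_RInt (fun t => D * (t - t^2 - A * Rpower t (K - 1))) eps 1 (D * I))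
  by exact (is_RInt_scal _ _ _ D _ (young_minorant_integral A eps he)).
assert (tail_ge : D * I <= RInt g eps 1).
{ rewrite <- (is_RInt_unique _ eps 1 _ hw).
  apply RInt_le; [lra | eexists; exact hw | exact hex1 |].
  intros x hx. unfold g. rewrite beta_integrand_interior by lra.
  pose proof (young_pointwise s x hs ltac:(lra)). fold A in H.
  replace (Rpower x p * Rpower (1 - x) q)
    with (D * (Rpower x p * Rpower (1 - x) q / (q * Rpower s (q - 1))))
    by (unfold D; pose proof (Rpower_gt0 s (q - 1)); field; split; lra).
  apply Rmult_le_compat_l; lra. }
assert (hI_ge : 1 / 6 - s / (p * K) - eps^2 / 2 <= I).
{ assert (0 < A * Rpower eps K / K).
  { unfold A. pose proof (Rpower_gt0 eps K).
    apply Rdiv_lt_0_compat; [apply Rmult_lt_0_compat; [apply Rdiv_lt_0_compat|]|]; lra. }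
  assert (0 < eps^3) by (apply pow_lt; lra).
  replace (s / (p * K)) with (A / K) by (unfold A; field; lra). unfold I. lra. }
nra.
Qed.

(* The Beta lower bound: beta(p+1,q+1) >= (K/6)^(q-1)/6 (take s = K/6, eps -> 0). *)
Lemma beta_lower_bound B : is_beta (p + 1) (q + 1) B -> Rpower (K / 6) (q - 1) / 6 <= B.
Proof.
intros hb.
set (s := K / 6). assert (hs : 0 < s) by (unfold s; lra).
set (D := q * Rpower s (q - 1)).
assert (hD : 0 < D) by (unfold D; pose proof (Rpower_gt0 s (q - 1)); nra).
replace (Rpower s (q - 1) / 6) with (D * (1 / 6 - s / (p * K)))
  by (unfold D, s; rewrite p_conj; field; repeat split; lra).
apply (le_of_forall_sub_sq _ B (D / 2)); [lra|].
intros eps he. replace (D / 2 * eps^2) with (D * eps^2 / 2) by field.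
exact (beta_ge_minus_sq B s eps hb hs he).
Qed.

(* Consequently the constant of the theorem, K^(-(q-1)/q) beta(p+1,q+1)^(1/q),
   is at least 1/6, the constant of the trapezoid rule. *)
Lemma holder_constant_ge_sixth B : is_beta (p + 1) (q + 1) B ->
  1 / 6 <= rpow ((q - 1) / (2 * q - p - 1)) ((q - 1) / q) * rpow B (1 / q).
Proof.
intros hb.
set (X := Rpower (K / 6) (q - 1) / 6).
assert (hX : 0 < X) by (unfold X; pose proof (Rpower_gt0 (K / 6) (q - 1)); lra).
assert (hXB : X <= B) by exact (beta_lower_bound B hb).
assert (e1 : rpow ((q - 1) / (2 * q - p - 1)) ((q - 1) / q) = Rpower (/ K) ((q - 1) / q)).
{ unfold rpow. destruct Req_EM_T as [e|].
  - exfalso. pose proof (Rdiv_lt_0_compat (q - 1) (2 * q - p - 1) ltac:(lra) K_pos). lra.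
  - f_equal. unfold K. field. lra. }
assert (e2 : rpow B (1 / q) = Rpower B (1 / q))
  by (unfold rpow; destruct Req_EM_T; [lra | reflexivity]).
assert (eX : Rpower (/ K) ((q - 1) / q) * Rpower X (1 / q) = 1 / 6).
{ unfold X, Rpower at 1 2. rewrite <- exp_plus.
  pose proof (Rpower_gt0 (K / 6) (q - 1)).
  rewrite ln_div, ln_Rinv, ln_Rpower, ln_div by lra.
  replace ((q - 1) / q * - ln K + 1 / q * ((q - 1) * (ln K - ln 6) - ln 6)) with (- ln 6)
    by (field; lra).
  rewrite exp_Ropp, exp_ln by lra. field. }
assert (Rpower X (1 / q) <= Rpower B (1 / q))
  by (apply Rle_Rpower_l; [apply Rlt_le, Rdiv_lt_0_compat | ]; lra).
pose proof (Rpower_gt0 (/ K) ((q - 1) / q)).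
rewrite e1, e2. nra.
Qed.

End BetaLowerBound.

Lemma rpow_nonneg x y : 0 <= rpow x y.
Proof.
unfold rpow. destruct Req_EM_T; [destruct Req_EM_T; lra | apply Rlt_le, Rpower_gt0].
Qed.

Lemma Rmax_nondecreasing (f : R -> R) u v :
  (forall x y, 0 <= x <= y -> f x <= f y) -> 0 <= u -> 0 <= v ->
  Rmax (f u) (f v) = f (Rmax u v).
Proof.
intros hf hu hv. destruct (Rle_dec u v).
- rewrite (Rmax_right u v), Rmax_right by (try apply hf; lra). reflexivity.
- rewrite (Rmax_left u v), Rmax_left by (try apply hf; lra). reflexivity.
Qed.

Lemma rpow_le_compat u v y : 0 <= u <= v -> 0 < y -> rpow u y <= rpow v y.
Proof.
intros h hy. destruct (Req_EM_T u 0) as [->|ne].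
- replace (rpow 0 y) with 0; [apply rpow_nonneg|].
  unfold rpow. repeat (destruct (Req_EM_T _ _); try lra).
- unfold rpow. repeat (destruct (Req_EM_T _ _); try lra). apply Rle_Rpower_l; lra.
Qed.

Lemma rpow_INR_mul x m y : 0 <= x -> 0 < y -> rpow x (INR m * y) = rpow (x ^ m) y.
Proof.
intros [hx|<-] hy.
- unfold rpow. destruct (Req_EM_T x 0); [lra|].
  destruct (Req_EM_T (x ^ m) 0) as [e|]; [pose proof (pow_lt x m hx); lra|].
  now rewrite <- Rpower_mult, Rpower_pow.
- destruct m as [|m]; unfold rpow.
  + simpl. rewrite Rmult_0_l. repeat (destruct (Req_EM_T _ _); try lra).
    unfold Rpower. now rewrite ln_1, Rmult_0_r, exp_0.
  + rewrite pow_ne_zero by lia. rewrite S_INR. pose proof (pos_INR m).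
    repeat (destruct (Req_EM_T _ _); try nra).
Qed.

Lemma rpow_rpow_inv w y : 0 <= w -> 0 < y -> rpow (rpow w y) (1 / y) = w.
Proof.
intros [hw|<-] hy.
- unfold rpow at 2. destruct (Req_EM_T w 0); [lra|].
  unfold rpow. destruct (Req_EM_T (Rpower w y) 0) as [hz|].
  + pose proof (Rpower_gt0 w y). lra.
  + rewrite Rpower_mult. replace (y * (1 / y)) with 1 by (field; lra). now apply Rpower_1.
- assert (0 < 1 / y) by (apply Rdiv_lt_0_compat; lra).
  unfold rpow. repeat (destruct (Req_EM_T _ _); try lra).
Qed.

Lemma rpow_max_abs_pow x z m y : 0 < y ->
  rpow (Rmax (rpow (Rabs x) (INR m * y)) (rpow (Rabs z) (INR m * y))) (1 / y)
  = Rmax (Rabs x) (Rabs z) ^ m.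
Proof.
intros hy.
rewrite !rpow_INR_mul by (auto using Rabs_pos).
rewrite (Rmax_nondecreasing (fun u => rpow u y))
  by (auto using pow_le, Rabs_pos; intros; apply rpow_le_compat; auto).
rewrite (Rmax_nondecreasing (fun u => u ^ m))
  by (auto using Rabs_pos; intros; apply pow_incr; lra).
apply rpow_rpow_inv; auto using pow_le, Rmax_abs_nonneg.
Qed.

Theorem proposition5 (a b : R) (n : nat) (q p B : R) :
  a < b -> (2 <= n)%nat -> 1 < q -> p = q / (q - 1) -> 2 * q - p - 1 > 0 ->
  is_beta (p + 1) (q + 1) B ->
  Rabs (Amean (a ^ n) (b ^ n) - Lnn n a b) <=
    INR n * (INR n - 1) * (b - a) ^ 2 / 2
    * rpow ((q - 1) / (2 * q - p - 1)) ((q - 1) / q)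
    * rpow B (1 / q)
    * rpow (Rmax (rpow (Rabs a) ((INR n - 2) * q)) (rpow (Rabs b) ((INR n - 2) * q))) (1 / q).
Proof.
intros hab hn hq hp hK hb.
destruct (Nat.le_exists_sub 2 n hn) as [m [-> _]].
assert (hINR : INR (m + 2) = INR m + 2) by (rewrite plus_INR; reflexivity).
replace (INR (m + 2) - 2) with (INR m) by lra.
rewrite rpow_max_abs_pow by lra.
apply Rle_trans with (1 := trapezoid_monomial a m b hab).
set (C := rpow ((q - 1) / (2 * q - p - 1)) ((q - 1) / q) * rpow B (1 / q)).
assert (hC : 1 / 6 <= C) by exact (holder_constant_ge_sixth q p hq hp hK B hb).
set (M := Rmax (Rabs a) (Rabs b) ^ m).
set (c := (INR m + 2) * (INR m + 1) * (b - a) ^ 2 / 2 * M).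
assert (hc : 0 <= c).
{ pose proof (pos_INR m). pose proof (pow2_ge_0 (b - a)).
  pose proof (pow_le _ m (Rmax_abs_nonneg a b)). unfold c.
  apply Rmult_le_pos; [|assumption]. apply Rmult_le_pos; [|lra]. apply Rmult_le_pos; nra. }
rewrite hINR.
replace ((INR m + 2) * (INR m + 1) * (b - a) ^ 2 / 12 * M)
  with (c * (1 / 6)) by (unfold c; field).
replace ((INR m + 2) * (INR m + 2 - 1) * (b - a) ^ 2 / 2
         * rpow ((q - 1) / (2 * q - p - 1)) ((q - 1) / q) * rpow B (1 / q) * M)
  with (c * C) by (unfold c, C; field).
now apply Rmult_le_compat_l.
Qed.
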